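(* Let $f(x)=p(x)/q(x)$ where $p,q$ are real polynomials, $q$ not identically zero, $p$ not identically zero, and $p,q$ have no common real zero. Let $\Omega=\mathbb{R}\setminus\{x\in\mathbb{R}:q(x)=0\}$. Then $f:\Omega\to\mathbb{R}$ is amenable.
   Context: Relative distance on $\mathbb{R}$: $\mathrm{dist}(x,y)=0$ if $x=y=0$, $\mathrm{dist}(x,y)=|\log(y/x)|$ if $xy>0$, and $\mathrm{dist}(x,y)=\infty$ otherwise. For a real analytic function $f$ on an open set $\Omega\subseteq\mathbb{R}$, not identically zero, the condition number is $\kappa(f,x)=0$ if $x=0$, $\kappa(f,x)=\infty$ if $x\neq0$ and $f(x)=0$, and $\kappa(f,x)=|x|\,|f'(x)|/|f(x)|$ otherwise; $\mu(f,x)=1+\kappa(f,x)$. $f:\Omega\to\mathbb{R}$ is amenable if there is $C>0$ such that for every $x\in\Omega$ with $\kappa(f,x)<\infty$, the set $B_x=\{y\in\mathbb{R}:\mathrm{dist}(y,x)<1/(C\mu(f,x))\}$ is contained in $\Omega$ and $\mu(f,y)\leq C\mu(f,x)$ for all $y\in B_x$. *)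

From HB Require Import structures.
From mathcomp Require Import all_boot all_order all_algebra.
From mathcomp Require Import all_classical all_reals all_analysis.
Set Implicit Arguments. Unset Strict Implicit. Unset Printing Implicit Defensive.
Import Order.TTheory GRing.Theory Num.Theory.
Import numFieldNormedType.Exports.
Local Open Scope classical_set_scope.
Local Open Scope ring_scope.

Section Amenable.
Variable R : realType.

Definition rdist (x y : R) : \bar R :=
  if (x == 0) && (y == 0) then 0%E
  else if 0 < x * y then (`|ln (y / x)|)%:E
  else +oo%E.

Definition kappa (f : R -> R) (x : R) : \bar R :=
  if x == 0 then 0%E
  else if f x == 0 then +oo%E
  else (`|x| * `|derive1 f x| / `|f x|)%:E.

Definition mu (f : R -> R) (x : R) : \bar R := (1%:E + kappa f x)%E.

Definition amenable (f : R -> R) (Omega : set R) : Prop :=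
  exists C : R, 0 < C /\
    forall x, Omega x -> (kappa f x < +oo)%E ->
      let B := [set y | (rdist y x < ((C * fine (mu f x))^-1)%:E)%E] in
      B `<=` Omega /\
      forall y, B y -> (mu f y <= (C * fine (mu f x))%:E)%E.

End Amenable.

From mathcomp Require Import all_boot all_order all_algebra.
From mathcomp Require Import all_classical all_reals all_analysis.
From mathcomp Require Import ring lra zify.
Set Implicit Arguments. Unset Strict Implicit. Unset Printing Implicit Defensive.
Import Order.TTheory GRing.Theory Num.Theory.
Import numFieldNormedType.Exports.
Local Open Scope classical_set_scope.
Local Open Scope ring_scope.

(* Write x f'(x) / f(x) = W(x) / (p q)(x) with W = X (p' q - p q') and cancel
   the gcd: kappa(f, x) = |B(x) / A(x)| for coprime A, B with deg B <= deg A.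
   At a nonzero zero or pole a of f, W vanishes to a strictly lower order than
   p q, so A(a) = 0.  Hence T = A / sqrt (A^2 + B^2) satisfies 1 <= |T| mu <= 2
   wherever kappa is finite, and T(y) <> 0 only at such points.  As B, X A' and
   X B' are O(sqrt (A^2 + B^2)), x T'(x) is bounded, so T is Lipschitz for the
   relative distance: on a relative ball of radius 1 / (C mu(x)) the value |T|
   stays above |T(x)| / 2, which keeps the ball in Omega and mu below 4 mu(x). *)

Section Amenability.
Variable R : realType.
Implicit Types (f T : R -> R) (x y d : R).

Lemma norm_subr1_le_ln (w d : R) :
  0 < w -> `|ln w| <= d -> d <= 1 / 2 -> `|w - 1| <= 2 * d.
Proof.
move=> w0 lnw d_small; have d0 := le_trans (normr_ge0 _) lnw.
have /ler_normlP[lnw_lo lnw_hi] := lnw.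
have ln_le (v : R) : 0 < v -> ln v <= v - 1.
  by move=> v0; have := @le_ln1Dx R (v - 1); rewrite addrCA subrr addr0; apply; lra.
have [w1|w1] := leP 1 w; last first.
  by have := ln_le w w0; rewrite ltr0_norm ?subr_lt0 //; lra.
have lnVw : ln w^-1 <= w^-1 - 1 by rewrite ln_le // invr_gt0.
rewrite lnV ?posrE // in lnVw.
have lnw_w : w - 1 <= ln w * w.
  have := ler_wpM2r (ltW w0) lnVw.
  by rewrite mulrBl mulVf ?gt_eqF // mulNr; lra.
have := ler_wpM2r (ltW w0) lnw_hi.
rewrite ger0_norm ?subr_ge0 //; nra.
Qed.

Lemma rdist0_lt_fin (y e : R) : (rdist y 0 < e%:E)%E -> y = 0.
Proof.
by rewrite /rdist eqxx andbT mulr0 ltxx; case: eqP => // _; rewrite ltNge leey.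
Qed.

Lemma rdist_lt_close x y d :
  x != 0 -> d <= 1 / 2 -> (rdist y x < d%:E)%E -> `|y - x| <= 2 * d * `|x|.
Proof.
move=> x0 d_small; rewrite /rdist (negbTE x0) andbF.
have [yx_gt0|] := ltP 0 (y * x); last by rewrite ltNge leey.
have y_x_gt0 : 0 < y / x.
  have -> : y / x = y * x / x ^+ 2 by field.
  by rewrite divr_gt0 // exprn_even_gt0 //= x0.
rewrite lte_fin -[x / y]invf_div lnV ?posrE // normrN.
move=> /ltW /norm_subr1_le_ln close1.
have -> : y - x = x * (y / x - 1) by field.
by rewrite normrM mulrC ler_wpM2r // close1.
Qed.

Lemma mu0 f : mu f 0 = 1%:E.
Proof. by rewrite /mu /kappa eqxx adde0. Qed.

Lemma mu_fin {f x} :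
  (kappa f x < +oo)%E -> mu f x = (fine (mu f x))%:E /\ 1 <= fine (mu f x).
Proof.
rewrite /mu /kappa; case: ifP => _; first by rewrite adde0.
case: ifP => _ //= _; split => //.
by rewrite lerDl mulr_ge0 // invr_ge0.
Qed.

Lemma amenable_of_gauge f (Omega : set R) T (L : R) : 0 <= L ->
  (forall x y, x != 0 -> `|y - x| <= `|x| / 2 ->
     `|T y - T x| <= L * `|y - x| / `|x|) ->
  (forall y, y != 0 -> T y != 0 -> Omega y /\ (kappa f y < +oo)%E) ->
  (forall y, y != 0 -> Omega y -> (kappa f y < +oo)%E ->
     1 <= `|T y| * fine (mu f y) <= 2) ->
  amenable f Omega.
Proof.
move=> L0 T_lip T_dom T_mu.
(* [C = 4 L + 8] keeps the relative radius below [1/8] and lets [T] move by at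
   most half of the lower bound [1 / mu] on [|T|]. *)
pose C := 4 * L + 8; have C8 : 8 <= C by rewrite /C lerDr mulr_ge0.
exists C; split; first exact: lt_le_trans C8.
move=> x Ox kx /=; have [x0|x0] := eqVneq x 0.
  subst x; rewrite mu0 /= mulr1; split => y /rdist0_lt_fin -> //.
  by rewrite mu0 lee_fin; lra.
have [_ m1] := mu_fin kx; have [Tx1 _] := andP (T_mu x x0 Ox kx).
set m := fine (mu f x) in m1 Tx1 *.
have ball y : (rdist y x < ((C * m)^-1)%:E)%E ->
    [/\ y != 0, T y != 0 & 1 <= `|T y| * (2 * m)].
  set d := (C * m)^-1 => ryx.
  have Cm_gt0 : 0 < C * m by rewrite mulr_gt0 //; lra.
  have dCm : d * (C * m) = 1 by rewrite mulVf ?gt_eqF.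
  have d_gt0 : 0 < d by rewrite invr_gt0.
  have d8 : d * 8 <= 1 by rewrite -[leRHS]dCm ler_pM2l //; nra.
  have x_gt0 : 0 < `|x| by rewrite normr_gt0.
  have yx : `|y - x| <= 2 * d * `|x| by apply: rdist_lt_close ryx => //; lra.
  have y0 : y != 0.
    by apply: contraTneq yx => ->; rewrite sub0r normrN -ltNge; nra.
  have yx_half : `|y - x| <= `|x| / 2 by nra.
  have Tyx : `|T y - T x| <= L * (2 * d).
    by have := T_lip x y x0 yx_half; rewrite ler_pdivlMr //; nra.
  have Ty_ge : `|T x| - `|T y - T x| <= `|T y|.
    by have := lerB_normD (T x) (T y - T x); rewrite [T x + _]addrC subrK.
  have dm_ge0 : 0 <= d * m by rewrite mulr_ge0 ?ltW //; lra.
  have Ldm : 4 * L * (d * m) <= 1 by rewrite -[leRHS]dCm /C; nra.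
  have m_ge0 : 0 <= m by lra.
  have Tyx_m := ler_wpM2r m_ge0 Tyx; have Ty_m := ler_wpM2r m_ge0 Ty_ge.
  have Ty : 1 <= `|T y| * (2 * m) by nra.
  by split=> //; apply: contraTneq Ty => ->; rewrite normr0 mul0r ler10.
split => y /ball[y0 Ty0 Ty]; first exact: (T_dom y y0 Ty0).1.
have [Oy ky] := T_dom y y0 Ty0; have [-> my1] := mu_fin ky; rewrite lee_fin.
have [_ Ty2] := andP (T_mu y y0 Oy ky).
by have := ler_wpM2r (le_trans ler01 my1) Ty; nra.
Qed.

End Amenability.

Section HornerGrowth.
Variable R : realFieldType.
Implicit Types (a c p : {poly R}) (x : R).

Lemma norm_horner_le_sum p (k : nat) x : (size p <= k.+1)%N -> 1 <= `|x| ->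
  `|p.[x]| <= (\sum_(i < k.+1) `|p`_i|) * `|x| ^+ k.
Proof.
move=> sp x1; rewrite (horner_coef_wide x sp) mulr_suml.
apply: le_trans (ler_norm_sum _ _ _) _; apply: ler_sum => i _.
by rewrite normrM normrX ler_wpM2l // ler_weXn2l // -ltnS.
Qed.

Lemma norm_horner_ge_lead p x : p != 0 ->
  1 + 2 * (\sum_(i < (size p).-1) `|p`_i|) / `|lead_coef p| <= `|x| ->
  `|lead_coef p| * `|x| ^+ (size p).-1 / 2 <= `|p.[x]|.
Proof.
move=> p0; set n := (size p).-1; set S := \sum_(i < n) _; set l := `|lead_coef p|.
move=> x_big.
have l_gt0 : 0 < l by rewrite normr_gt0 lead_coef_eq0.
have S_ge0 : 0 <= S by rewrite sumr_ge0.
have x_ge1 : 1 <= `|x|.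
  by apply: le_trans x_big; rewrite lerDl divr_ge0 ?mulr_ge0 // ltW.
have sp : size p = n.+1 by rewrite prednK // size_poly_gt0.
rewrite (horner_coef_wide x (eq_leq sp)) big_ord_recr /=.
have -> : p`_(@ord_max n) = lead_coef p by rewrite lead_coefE sp.
set rest := \sum_(i < n) _.
have rest_le : `|rest| * `|x| <= S * `|x| ^+ n.
  rewrite mulr_suml; apply: le_trans (ler_wpM2r (normr_ge0 x) (ler_norm_sum _ _ _)) _.
  rewrite mulr_suml; apply: ler_sum => i _.
  by rewrite normrM normrX -mulrA ler_wpM2l // -exprSr ler_weXn2l.
have S_le : 2 * S <= l * `|x|.
  by rewrite [leRHS]mulrC -ler_pdivrMr //; apply: le_trans x_big; rewrite lerDr.
have xn_ge0 : 0 <= `|x| ^+ n by rewrite exprn_ge0.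
have := ler_wpM2r xn_ge0 S_le; have := lerB_normD (lead_coef p * x ^+ n) rest.
rewrite addrC normrM normrX -/l; nra.
Qed.

Lemma horner_bigO_infty a c : a != 0 -> (size c <= size a)%N ->
  exists r K, 0 <= K /\ forall x, r <= `|x| -> `|c.[x]| <= K * `|a.[x]|.
Proof.
move=> a0 sca; set n := (size a).-1; set l := `|lead_coef a|.
set Sc := \sum_(i < n.+1) `|c`_i|.
have l_gt0 : 0 < l by rewrite normr_gt0 lead_coef_eq0.
have Sc_ge0 : 0 <= Sc by rewrite sumr_ge0.
exists (1 + 2 * (\sum_(i < n) `|a`_i|) / l), (2 * Sc / l).
split => [|x x_big]; first by rewrite divr_ge0 ?mulr_ge0 // ltW.
have x_ge1 : 1 <= `|x|.
  by apply: le_trans x_big; rewrite lerDl divr_ge0 ?mulr_ge0 ?sumr_ge0 // ltW.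
have c_le : `|c.[x]| <= Sc * `|x| ^+ n.
  exact: norm_horner_le_sum (leq_trans sca (leqSpred _)) x_ge1.
have a_ge : l * `|x| ^+ n / 2 <= `|a.[x]| by exact: norm_horner_ge_lead.
have xn_le : `|x| ^+ n <= 2 * `|a.[x]| / l by rewrite ler_pdivlMr //; lra.
apply: le_trans c_le (le_trans (ler_wpM2l Sc_ge0 xn_le) _); lra.
Qed.

End HornerGrowth.

Section Wronskian.
Variable R : numFieldType.
Implicit Types (p q : {poly R}) (a : R).

Definition xwronskian p q := 'X * (p^`() * q - p * q^`()).
Definition kappa_gcd p q := gcdp (p * q) (xwronskian p q).
Definition kappa_den p q := (p * q) %/ kappa_gcd p q.
Definition kappa_num p q := xwronskian p q %/ kappa_gcd p q.

Lemma xwronskianC p q : xwronskian q p = - xwronskian p q.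
Proof. by rewrite /xwronskian; ring. Qed.

Lemma dvdp_XsubC_expS_xwronskian p q a (k : nat) : a != 0 -> ~~ root q a ->
  ('X - a%:P) ^+ k.+1 %| p * q -> ('X - a%:P) ^+ k.+1 %| xwronskian p q ->
  ('X - a%:P) ^+ k.+2 %| p * q.
Proof.
move=> a0 qa; set u := 'X - a%:P; set e := u ^+ k.+1 => e_pq e_W.
have u0 : u != 0 by rewrite polyXsubC_eq0.
have e_q : coprimep e q by rewrite coprimep_expl // coprimep_sym coprimep_XsubC.
have e_X : coprimep e 'X.
  by rewrite coprimep_expl // coprimep_sym coprimep_XsubC rootX.
have e_p : e %| p by rewrite -(Gauss_dvdpl _ e_q).
have e_Xp'q : e %| 'X * (p^`() * q).
  have -> : 'X * (p^`() * q) = xwronskian p q + 'X * (p * q^`()) by rewrite /xwronskian; ring.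
  by rewrite dvdp_add // dvdp_mull // dvdp_mulr.
have e_p' : e %| p^`().
  by move: e_Xp'q; rewrite mulrC (Gauss_dvdpl _ e_X) (Gauss_dvdpl _ e_q).
have [s p_se] := dvdpP _ _ e_p.
(* [p' = s' e + (k + 1) s u ^ k], and [k + 1 != 0] in characteristic 0. *)
have u_s : u %| s.
  move: e_p'; rewrite p_se derivM deriv_exp derivXsubC mul1r /=.
  rewrite (dvdp_addr _ (dvdp_mull _ (dvdpp e))) mulrnAr -mulrnAl /e exprS.
  by rewrite dvdp_mul2r ?expf_neq0 // /u !dvdp_XsubCl /root hornerMn mulrn_eq0.
by rewrite p_se dvdp_mulr // exprSr mulrC dvdp_mul.
Qed.

Lemma kappa_gcd_neq0 p q : p * q != 0 -> kappa_gcd p q != 0.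
Proof. by move=> pq0; rewrite gcdp_eq0 negb_and pq0. Qed.

Lemma kappa_denE p q : p * q = kappa_den p q * kappa_gcd p q.
Proof. by rewrite divpK ?dvdp_gcdl. Qed.

Lemma kappa_numE p q : xwronskian p q = kappa_num p q * kappa_gcd p q.
Proof. by rewrite divpK ?dvdp_gcdr. Qed.

Lemma coprimep_kappa p q : p * q != 0 -> coprimep (kappa_den p q) (kappa_num p q).
Proof. by move=> pq0; rewrite coprimep_div_gcd ?pq0. Qed.

Lemma root_kappa_den p q a : (forall x, ~ (root p x /\ root q x)) ->
  p * q != 0 -> a != 0 -> root (p * q) a -> root (kappa_den p q) a.
Proof.
move=> no_common pq0 a0 pq_a; apply: contraT => den_a.
have [m [r + pq_r]] := multiplicity_XsubC (p * q) a; rewrite pq0 /= => r_a.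
set u := 'X - a%:P in pq_r.
case: m pq_r => [|k] pq_r.
  by move: pq_a; rewrite pq_r expr0 mulr1 (negbTE r_a).
have u_pq : u ^+ k.+1 %| p * q by rewrite pq_r dvdp_mull.
have u_W : u ^+ k.+1 %| xwronskian p q.
  apply: dvdp_trans (dvdp_gcdr (p * q) _).
  have u_den : coprimep (u ^+ k.+1) (kappa_den p q).
    by rewrite coprimep_expl // coprimep_sym coprimep_XsubC.
  by rewrite -(Gauss_dvdpr _ u_den) -kappa_denE.
have u_pq2 : u ^+ k.+2 %| p * q.
  move: pq_a; rewrite rootM => /orP[p_a|q_a].
    apply: dvdp_XsubC_expS_xwronskian => //.
    by apply/negP => q_a; apply: (no_common a).
  rewrite mulrC; apply: dvdp_XsubC_expS_xwronskian => //.
  - by apply/negP => p_a; apply: (no_common a).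
  - by rewrite mulrC.
  - by rewrite xwronskianC dvdpNr.
move: u_pq2; rewrite pq_r exprS dvdp_mul2r ?expf_neq0 ?polyXsubC_eq0 //.
by rewrite dvdp_XsubCl (negbTE r_a).
Qed.

Lemma size_X_deriv p : (size ('X * p^`())%R <= size p)%N.
Proof.
have [->|p0] := eqVneq p 0; first by rewrite deriv0 mulr0 size_poly0.
by apply: leq_trans (size_polyMleq _ _) _; rewrite size_polyX add2n lt_size_deriv.
Qed.

Lemma size_xwronskian p q : (size (xwronskian p q) <= size (p * q)%R)%N.
Proof.
have [->|p0] := eqVneq p 0; first by rewrite /xwronskian deriv0 !mul0r subr0 mulr0.
have [->|q0] := eqVneq q 0; first by rewrite /xwronskian deriv0 !mulr0 subr0 mulr0.
apply: leq_trans (size_polyMleq _ _) _; rewrite size_polyX size_mul //.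
have := size_polyD (p^`() * q) (- (p * q^`())); rewrite size_polyN.
have := size_polyMleq p^`() q; have := size_polyMleq p q^`().
have := lt_size_deriv p0; have := lt_size_deriv q0.
have := size_poly_gt0 p; have := size_poly_gt0 q; rewrite p0 q0.
rewrite add2n /=; move: (size (p^`() * q - p * q^`())%R) (size (p^`() * q)%R) (size (p * q^`())%R).
by move: (size p) (size q) (size p^`()) (size q^`()); lia.
Qed.

Lemma size_kappa_num p q : p * q != 0 ->
  (size (kappa_num p q) <= size (kappa_den p q))%N.
Proof.
by move=> pq0; rewrite !size_divp ?kappa_gcd_neq0 // leq_sub2r ?size_xwronskian.
Qed.

End Wronskian.

Lemma coprimep_sqr_horner_gt0 (R : realFieldType) (a b : {poly R}) (x : R) :
  coprimep a b -> 0 < a.[x] ^+ 2 + b.[x] ^+ 2.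
Proof.
move=> ab; have [ax0|ax0] := eqVneq a.[x] 0.
  have bx0 : b.[x] != 0 by apply: coprimep_root ab _; rewrite /root ax0.
  by rewrite ax0 expr0n add0r exprn_even_gt0 //= bx0.
by rewrite ltr_pwDl ?sqr_ge0 // exprn_even_gt0 //= ax0.
Qed.

Section RealAnalysis.
Variable R : realType.
Implicit Types x : R.

Lemma horner_dominated (a c : {poly R}) (D : R -> R) : (size c <= size a)%N ->
  continuous D -> (forall x, 0 < D x) -> (forall x, `|a.[x]| <= D x) ->
  exists K, forall x, `|c.[x]| <= K * D x.
Proof.
move=> sca D_cont D_gt0 aD; have [a0|a0] := eqVneq a 0.
  move: sca; rewrite a0 size_poly0 leqn0 size_poly_eq0 => /eqP ->.
  by exists 0 => x; rewrite horner0 normr0 mul0r.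
have [r [K [K_ge0 c_le]]] := horner_bigO_infty a0 sca.
have r_le : - `|r| <= `|r| by have := normr_ge0 r; lra.
have c_cont : continuous (fun x => `|c.[x]|).
  by move=> x; apply: continuous_comp; [exact: continuous_horner | exact: norm_continuous].
have [m _ D_min] := EVT_min r_le (continuous_subspaceT D_cont).
have [M _ c_max] := EVT_max r_le (continuous_subspaceT c_cont).
have K'_ge0 : 0 <= `|c.[M]| / D m := divr_ge0 (normr_ge0 _) (ltW (D_gt0 m)).
exists (K + `|c.[M]| / D m) => x; rewrite mulrDl.
have [x_big|x_small] := leP `|r| `|x|.
  apply: le_trans (c_le x (le_trans (ler_norm r) x_big)) _.
  rewrite -[leLHS]addr0 lerD ?ler_wpM2l //.
  exact: mulr_ge0 K'_ge0 (ltW (D_gt0 x)).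
have x_in : x \in `[- `|r|, `|r|] by rewrite in_itv /= -ler_norml ltW.
apply: le_trans (c_max x x_in) _; rewrite -[leLHS]add0r.
apply: lerD; first exact: mulr_ge0 K_ge0 (ltW (D_gt0 x)).
rewrite mulrAC ler_pdivlMr //; exact: ler_wpM2l (D_min x x_in).
Qed.

Lemma xderive_bounded_lipschitz (f df : R -> R) (L : R) :
  (forall x : R, is_derive x 1 f (df x)) -> (forall x, `|x * df x| <= L) ->
  forall x y, x != 0 -> `|y - x| <= `|x| / 2 ->
  `|f y - f x| <= 2 * L * `|y - x| / `|x|.
Proof.
move=> f_df xdf_le x y x0 yx_le.
have f_cont : continuous f.
  move=> z; apply: differentiable_continuous; apply/derivable1_diffP.
  by case: (f_df z).
have [c cx_le ->] : exists2 c, `|c - x| <= `|y - x| & f y - f x = df c * (y - x).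
  have [xy|yx] := leP x y.
    have [c + ->] := MVT_segment xy (fun z _ => f_df z) (continuous_subspaceT f_cont).
    rewrite in_itv /= => /andP[xc cy]; exists c => //.
    by rewrite !ger0_norm ?subr_ge0 // lerD2r.
  have [c + fyx] := MVT_segment (ltW yx) (fun z _ => f_df z) (continuous_subspaceT f_cont).
  rewrite in_itv /= => /andP[yc cx]; exists c.
    by rewrite !ler0_norm ?subr_le0 ?(ltW yx) // !opprB lerD2l lerN2.
  by rewrite -opprB fyx -mulrN opprB.
have x_gt0 : 0 < `|x| by rewrite normr_gt0.
have c_ge : `|x| / 2 <= `|c|.
  by have := ler_distD c x 0; rewrite !subr0 distrC; lra.
have L_ge0 : 0 <= L := le_trans (normr_ge0 _) (xdf_le c).
have dfc_le : `|df c| <= 2 * L / `|x|.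
  by rewrite ler_pdivlMr //; have := xdf_le c; rewrite normrM; nra.
by rewrite normrM [leRHS]mulrAC ler_wpM2r.
Qed.

Lemma norm_cross_le (a b u v Ku Kv : R) : `|a| <= 1 -> `|b| <= 1 ->
  `|u| <= Ku -> `|v| <= Kv -> `|b * (u * b - a * v)| <= Ku + Kv.
Proof.
move=> a_le b_le u_le v_le; rewrite normrM -[Ku + Kv]mul1r.
apply: ler_pM => //; apply: le_trans (ler_normB _ _) _.
rewrite !normrM -[Ku]mulr1 -[Kv]mul1r.
by apply: lerD; apply: ler_pM.
Qed.

Section PolyCosine.
Variables A B : {poly R}.

Definition pnorm (x : R) := Num.sqrt (A.[x] ^+ 2 + B.[x] ^+ 2).
Definition pcos (x : R) := A.[x] / pnorm x.
Definition pcos_deriv (x : R) :=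
  B.[x] * (A^`().[x] * B.[x] - A.[x] * B^`().[x]) / pnorm x ^+ 3.

Lemma pnorm_ge_normA x : `|A.[x]| <= pnorm x.
Proof. by rewrite /pnorm -sqrtr_sqr ler_sqrt ?addr_ge0 ?sqr_ge0 // lerDl sqr_ge0. Qed.

Lemma pnorm_ge_normB x : `|B.[x]| <= pnorm x.
Proof. by rewrite /pnorm -sqrtr_sqr ler_sqrt ?addr_ge0 ?sqr_ge0 // lerDr sqr_ge0. Qed.

Lemma pcos_normB_bound x : A.[x] != 0 ->
  1 <= `|pcos x| * (1 + `|B.[x] / A.[x]|) <= 2.
Proof.
move=> Ax0; have a_gt0 : 0 < `|A.[x]| by rewrite normr_gt0.
have s_gt0 : 0 < pnorm x by apply: lt_le_trans (pnorm_ge_normA x).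
have s2 : pnorm x ^+ 2 = `|A.[x]| ^+ 2 + `|B.[x]| ^+ 2.
  by rewrite sqr_sqrtr ?addr_ge0 ?sqr_ge0 // !real_normK ?num_real.
have -> : `|pcos x| * (1 + `|B.[x] / A.[x]|) = (`|A.[x]| + `|B.[x]|) / pnorm x.
  by rewrite /pcos !normrM !normfV (gtr0_norm s_gt0); field; rewrite !gt_eqF.
rewrite ler_pdivlMr // ler_pdivrMr // mul1r.
have := pnorm_ge_normA x; have := pnorm_ge_normB x; have := normr_ge0 B.[x].
by move=> *; apply/andP; split; nra.
Qed.

Hypothesis AB_gt0 : forall x, 0 < A.[x] ^+ 2 + B.[x] ^+ 2.

Lemma pnorm_gt0 x : 0 < pnorm x.
Proof. by rewrite sqrtr_gt0. Qed.

Lemma pnormE : pnorm = Num.sqrt \o horner (A ^+ 2 + B ^+ 2).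
Proof. by apply/funext => x; rewrite /pnorm /= hornerD !horner_exp. Qed.

Lemma continuous_pnorm : continuous pnorm.
Proof.
rewrite pnormE => x; apply: continuous_comp.
  exact: continuous_horner.
exact: sqrt_continuous.
Qed.

Lemma is_derive_pcos x : is_derive x 1 pcos (pcos_deriv x).
Proof.
have s0 : pnorm x != 0 by rewrite gt_eqF ?pnorm_gt0.
have D_gt0 : 0 < (A ^+ 2 + B ^+ 2).[x] by rewrite hornerD !horner_exp.
have dsqrt := is_derive1_comp (is_derive1_sqrt D_gt0) (is_derive_poly _ x).
rewrite -pnormE in dsqrt.
have := is_deriveM (is_derive_poly A x) (is_deriveV s0 dsqrt).
have -> : (horner A * (fun y => (pnorm y)^-1)) = pcos by [].
move/is_derive_eq; apply.
have s2 : pnorm x ^+ 2 = A.[x] ^+ 2 + B.[x] ^+ 2 by rewrite sqr_sqrtr // ltW.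
rewrite derivD !deriv_exp /= hornerD !hornerMn !hornerM !expr1 -/(pnorm x) /pcos_deriv.
have -> : B.[x] * (A^`().[x] * B.[x] - A.[x] * B^`().[x]) =
  A^`().[x] * pnorm x ^+ 2 - A.[x] * (A.[x] * A^`().[x] + B.[x] * B^`().[x]).
  by rewrite s2; ring.
have -> : Num.sqrt (A ^+ 2 + B ^+ 2).[x] = pnorm x by rewrite pnormE.
by rewrite /GRing.scale /=; field.
Qed.

Hypothesis size_BA : (size B <= size A)%N.

Lemma xderive_pcos_bounded : exists L, forall x, `|x * pcos_deriv x| <= L.
Proof.
have [KA KA_le] := horner_dominated (size_X_deriv A)
  continuous_pnorm pnorm_gt0 pnorm_ge_normA.
have [KB KB_le] := horner_dominated (leq_trans (size_X_deriv B) size_BA)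
  continuous_pnorm pnorm_gt0 pnorm_ge_normA.
exists (KA + KB) => x; have s_gt0 := pnorm_gt0 x.
have ratio_le (w K : R) : `|w| <= K * pnorm x -> `|w / pnorm x| <= K.
  by rewrite normrM normfV (gtr0_norm s_gt0) ler_pdivrMr.
have a_le : `|A.[x] / pnorm x| <= 1 by rewrite ratio_le // mul1r pnorm_ge_normA.
have b_le : `|B.[x] / pnorm x| <= 1 by rewrite ratio_le // mul1r pnorm_ge_normB.
have u_le : `|x * A^`().[x] / pnorm x| <= KA.
  by rewrite ratio_le //; have := KA_le x; rewrite hornerM hornerX.
have v_le : `|x * B^`().[x] / pnorm x| <= KB.
  by rewrite ratio_le //; have := KB_le x; rewrite hornerM hornerX.
have -> : x * pcos_deriv x = B.[x] / pnorm x *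
    (x * A^`().[x] / pnorm x * (B.[x] / pnorm x) - A.[x] / pnorm x * (x * B^`().[x] / pnorm x)).
  by rewrite /pcos_deriv; field; rewrite gt_eqF.
exact: norm_cross_le.
Qed.

End PolyCosine.

Lemma is_derive_ratio (p q : {poly R}) x : q.[x] != 0 ->
  is_derive x 1 (fun y => p.[y] / q.[y])
    ((p^`().[x] * q.[x] - p.[x] * q^`().[x]) / q.[x] ^+ 2).
Proof.
move=> qx0; have := is_deriveM (is_derive_poly p x) (is_deriveV qx0 (is_derive_poly q x)).
move/is_derive_eq; apply.
by rewrite /GRing.scale /=; field.
Qed.

Lemma kappa_ratio (p q : {poly R}) x : x != 0 -> p.[x] != 0 -> q.[x] != 0 ->
  (kappa_den p q).[x] != 0 /\
  kappa (fun y => p.[y] / q.[y]) x = (`|(kappa_num p q).[x] / (kappa_den p q).[x]|)%:E.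
Proof.
move=> x0 px0 qx0; have pqx0 : (p * q).[x] != 0 by rewrite hornerM mulf_neq0.
have := pqx0; rewrite kappa_denE hornerM mulf_eq0 negb_or => /andP[Mx0 Gx0].
split => //; rewrite /kappa (negbTE x0) mulf_eq0 invr_eq0 (negbTE px0) (negbTE qx0) /=.
have := is_derive_ratio p qx0; rewrite derive1E => dr; rewrite derive_val.
have -> : (kappa_num p q).[x] / (kappa_den p q).[x] = (xwronskian p q).[x] / (p * q).[x].
  by rewrite (kappa_numE p q) (kappa_denE p q) !hornerM -mulf_div divff // mulr1.
rewrite /xwronskian !hornerE -!normrM -normfV -normrM; congr (`|_|%:E).
by field; rewrite px0 qx0.
Qed.

End RealAnalysis.

Theorem mainTheorem7 (R : realType) (p q : {poly R}) :
  p != 0 -> q != 0 ->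
  (forall x : R, ~ (root p x /\ root q x)) ->
  amenable (fun x : R => p.[x] / q.[x]) [set x : R | q.[x] != 0].
Proof.
move=> p0 q0 no_common; have pq0 : p * q != 0 by rewrite mulf_neq0.
set A := kappa_den p q; set B := kappa_num p q.
have AB_gt0 (x : R) : 0 < A.[x] ^+ 2 + B.[x] ^+ 2.
  exact: coprimep_sqr_horner_gt0 (coprimep_kappa pq0).
have [L xdT_le] := xderive_pcos_bounded AB_gt0 (size_kappa_num pq0).
have L_ge0 : 0 <= L := le_trans (normr_ge0 _) (xdT_le 0).
apply: (amenable_of_gauge (T := pcos A B) (L := 2 * L)).
- by rewrite mulr_ge0.
- exact: xderive_bounded_lipschitz (is_derive_pcos AB_gt0) xdT_le.
- move=> y y0 Ty0; have Ay0 : A.[y] != 0.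
    by apply: contraNneq Ty0 => Ay0; rewrite /pcos Ay0 mul0r.
  have : ~~ root (p * q) y by apply: contra Ay0; exact: root_kappa_den.
  rewrite rootM negb_or => /andP[py0 qy0]; split => //.
  by have [_ ->] := kappa_ratio y0 py0 qy0; rewrite ltry.
- move=> y y0 /= qy0 ky; have py0 : p.[y] != 0.
    by apply: contraTneq ky => py0; rewrite /kappa (negbTE y0) py0 mul0r eqxx.
  have [Ay0 kE] := kappa_ratio y0 py0 qy0.
  by rewrite /mu kE /=; exact: pcos_normB_bound.
Qed.
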